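(* For every integer $k\ge2$, the polynomial $\widetilde{\Delta}_{3k,3}(C)$ has no roots in $\mathbb{Q}^{\mathrm{ab}}$, the maximal abelian extension of $\mathbb{Q}$.
   Context: Let $f_c(z)=z^2+c$, with iterates $f_c^{\circ 0}(z)=z$, $f_c^{\circ j}=f_c\circ f_c^{\circ(j-1)}$. For $n\ge1$ let $\Phi_n^*(z,c)=\prod_{j\mid n}(f_c^{\circ j}(z)-z)^{\mu(n/j)}$, and let $\delta_n(x,c)$ be the polynomial, monic in $x$, with $\delta_n(x,c)^n=\operatorname{Res}_z(\Phi_n^*(z,c),x-(f_c^{\circ n})'(z))$ (it lies in $\mathbb{Z}[x,4c]$ and is monic in $4c$). Let $\Psi_j$ be the $j$-th cyclotomic polynomial. For $m\mid n$, $m<n$, set $\Delta_{n,m}(c)=\operatorname{Res}_x(\Psi_{n/m}(x),\delta_m(x,c))$ and $\widetilde{\Delta}_{n,m}(C)=\Delta_{n,m}(C/4)\in\mathbb{Z}[C]$. Explicitly $\delta_3(x,C/4)=x^2-(2C+16)x+(C^3+8C^2+16C+64)$, so $\widetilde\Delta_{3k,3}(C)=\operatorname{Res}_x(\Psi_k(x),x^2-(2C+16)x+C^3+8C^2+16C+64)$. *)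

From HB Require Import structures.
From mathcomp Require Import all_boot all_order all_algebra all_fingroup all_solvable all_field.
Set Implicit Arguments. Unset Strict Implicit. Unset Printing Implicit Defensive.
Import GRing.Theory.
Local Open Scope ring_scope.

(* The variable C of Delta~ is the inner variable ('X : {poly int});
   the resultant variable x is the outer variable of {poly {poly int}}. *)
Definition Cvar : {poly int} := 'X.

(* delta_3(x, C/4) = x^2 - (2C+16) x + (C^3 + 8C^2 + 16C + 64), as a
   polynomial in x with coefficients in Z[C]. *)
Definition delta3C : {poly {poly int}} :=
  'X^2 - (2%:R * Cvar + 16%:R)%:P * 'X
  + (Cvar ^+ 3 + 8%:R * Cvar ^+ 2 + 16%:R * Cvar + 64%:R)%:P.

Definition Delta3k3 (k : nat) : {poly int} :=
  resultant (map_poly polyC 'Phi_k) delta3C.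

(* A root w of Delta~_{3k,3} yields a k-th root of unity zeta <> 1 with
   zeta^2 - (2w + 16) zeta + w^3 + 8w^2 + 16w + 64 = 0, i.e. (zeta - w - 8)^2 = -(w + 7) w^2.
   Then u = (zeta - w - 8) / w satisfies F(u) = -zeta for F(v) = v^3 + v^2 + 7v - 1, so u is
   an algebraic integer and |F(nu u)| = 1 for every automorphism nu of algC.  If w lies in an
   abelian extension of Q, complex conjugation commutes with every nu at u, so s = u + u^* and
   p = u u^* are algebraic integers with G(nu s, nu p) = |F(nu u)|^2 = 1 for all nu, where G is
   the polynomial cubF_norm.  An elementary study of the real curve G(s, p) = 1, s^2 <= 4p,
   gives |s^2 + s| < 1, so the algebraic integer s(s + 1), all of whose conjugates are smaller
   than 1, vanishes.  Then s = 0 forces u = 0, and s = -1 forces either p = 7 or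
   0 < p - 7 < 1 for all conjugates of p; each case contradicts zeta <> 1. *)

From HB Require Import structures.
From mathcomp Require Import all_boot all_order all_algebra all_fingroup all_solvable all_field.
From mathcomp Require Import ring lra.
Set Implicit Arguments.
Unset Strict Implicit.
Unset Printing Implicit Defensive.

Import Order.TTheory GRing.Theory Num.Theory.
Local Open Scope ring_scope.

(** * Real points of the curve |F(v)| = 1 *)

Definition cubF (R : pzRingType) (v : R) : R := v ^+ 3 + v ^+ 2 + 7 * v - 1.

Definition cubF_norm (R : pzRingType) (s p : R) : R :=
  p ^+ 3 + p ^+ 2 * s - 13 * p ^+ 2 + 7 * p * s ^+ 2 + 10 * p * s + 51 * p
  - s ^+ 3 - s ^+ 2 - 7 * s + 1.

Lemma cubF_normE (R : comPzRingType) (v w : R) :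
  cubF_norm (v + w) (v * w) = cubF v * cubF w.
Proof. rewrite /cubF_norm /cubF; ring. Qed.

Section RealCurve.
Variable R : realFieldType.
Implicit Types x y t s p : R.

(* With v = x + iy and t = y^2, the two squares are (Re F(v))^2 and (Im F(v))^2. *)
Lemma cubF_norm_rect x t : cubF_norm (2 * x) (x ^+ 2 + t) =
  (x ^+ 3 + x ^+ 2 + 7 * x - 1 - (3 * x + 1) * t) ^+ 2
  + t * (3 * x ^+ 2 + 2 * x + 7 - t) ^+ 2.
Proof. rewrite /cubF_norm; ring. Qed.

Lemma cubF_norm_rect_gt1 x t : 0 <= t -> 0 <= x -> 1 <= 4 * x ^+ 2 + 2 * x ->
  1 < cubF_norm (2 * x) (x ^+ 2 + t).
Proof.
move=> t_ge0 x_ge0 hx.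
have A_gt1 : 1 < (x ^+ 3 + x ^+ 2 + 7 * x - 1) ^+ 2 by nra.
have B_gt0 : 0 < 3 * x ^+ 4 + 4 * x ^+ 3 + 82 * x ^+ 2 + 132 * x + 35 by nra.
have -> : cubF_norm (2 * x) (x ^+ 2 + t) = (x ^+ 3 + x ^+ 2 + 7 * x - 1) ^+ 2
    + t * ((t + (3 * x ^+ 2 + 2 * x - 13) / 2) ^+ 2
           + (3 * x ^+ 4 + 4 * x ^+ 3 + 82 * x ^+ 2 + 132 * x + 35) / 4).
  by rewrite cubF_norm_rect; field.
apply: lt_le_trans A_gt1 _; rewrite lerDl mulr_ge0 // addr_ge0 ?sqr_ge0 //.
by rewrite divr_ge0 // ltW.
Qed.

Lemma cubic_lt_sextic y : 4 / 5 < y ->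
  (3 * y - 1) ^+ 3 < (y ^+ 3 - y ^+ 2 + 7 * y) * (8 * y * (y ^+ 2 - y + 2) - 9) ^+ 2.
Proof.
move=> hy.
have f1 : 6 * y <= y ^+ 3 - y ^+ 2 + 7 * y by nra.
have f2 : 11 / 4 * y <= 8 * y * (y ^+ 2 - y + 2) - 9 by nra.
have f3 : 121 / 16 * y ^+ 2 <= (8 * y * (y ^+ 2 - y + 2) - 9) ^+ 2.
  have y_ge0 : 0 <= 11 / 4 * y by nra.
  by have := ler_pM y_ge0 y_ge0 f2 f2; nra.
nra.
Qed.

(* |Re F| <= 1 forces a <= b t and e <= b (D - t), whence
   b^3 < a e^2 <= b^3 t (D - t)^2 = b^3 (Im F)^2 <= b^3. *)
Lemma cubF_norm_rectN_neq1 y t : 0 <= t -> 0 <= y -> 1 <= 4 * y ^+ 2 - 2 * y ->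
  cubF_norm (- (2 * y)) (y ^+ 2 + t) != 1.
Proof.
move=> t_ge0 y_ge0 hy; apply/eqP.
set a := y ^+ 3 - y ^+ 2 + 7 * y; set b := 3 * y - 1; set D := 3 * y ^+ 2 - 2 * y + 7.
set e := 8 * y * (y ^+ 2 - y + 2) - 9.
have -> : cubF_norm (- (2 * y)) (y ^+ 2 + t) = (b * t - a - 1) ^+ 2 + t * (D - t) ^+ 2.
  by rewrite /cubF_norm /a /b /D; ring.
move=> h.
have y_gt : 4 / 5 < y by nra.
have b_gt0 : 0 < b by rewrite /b; lra.
have a_gt0 : 0 < a by rewrite /a; nra.
have e_gt0 : 0 < e by rewrite /e; nra.
have T_ge0 : 0 <= t * (D - t) ^+ 2 by rewrite mulr_ge0 ?sqr_ge0.
have T_le1 : t * (D - t) ^+ 2 <= 1 by have := sqr_ge0 (b * t - a - 1); lra.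
have bt_ge : a <= b * t by nra.
have btD_ge : e <= b * (D - t).
  have -> : e = b * D - a - 2 by rewrite /e /a /b /D; ring.
  by nra.
have : a * e ^+ 2 <= (b * t) * (b * (D - t)) ^+ 2.
  by apply: ler_pM; rewrite ?sqr_ge0 ?(ltW a_gt0) //; nra.
have -> : (b * t) * (b * (D - t)) ^+ 2 = b ^+ 3 * (t * (D - t) ^+ 2) by ring.
have := cubic_lt_sextic y_gt; rewrite -/a -/b -/e.
have := ler_wpM2l (ltW (exprn_gt0 3 b_gt0)) T_le1; lra.
Qed.

Lemma cubF_norm_eq1_trace s p : s ^+ 2 <= 4 * p -> cubF_norm s p = 1 ->
  `|s ^+ 2 + s| < 1.
Proof.
move=> sp hG; rewrite ltr_norml; apply/andP; split; first by nra.
rewrite ltNge; apply/negP => hs.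
have t_ge0 : 0 <= p - s ^+ 2 / 4 by lra.
have [s_ge0 | s_lt0] := lerP 0 s.
  have := @cubF_norm_rect_gt1 (s / 2) _ t_ge0 ltac:(lra) ltac:(nra).
  have -> : 2 * (s / 2) = s by field.
  have -> : (s / 2) ^+ 2 + (p - s ^+ 2 / 4) = p by field.
  by rewrite hG ltxx.
have := @cubF_norm_rectN_neq1 (- (s / 2)) _ t_ge0 ltac:(lra) ltac:(nra).
have -> : - (2 * - (s / 2)) = s by field.
have -> : (- (s / 2)) ^+ 2 + (p - s ^+ 2 / 4) = p by field.
by rewrite hG eqxx.
Qed.

Lemma cubF_norm_eq1_trace0 p : 0 <= p -> cubF_norm 0 p = 1 -> p = 0.
Proof.
move=> p_ge0 /eqP; rewrite -subr_eq0.
have -> : cubF_norm 0 p - 1 = p * ((p - 13 / 2) ^+ 2 + 35 / 4) by rewrite /cubF_norm; field.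
rewrite mulf_eq0 => /orP[/eqP // | /eqP h].
by have := sqr_ge0 (p - 13 / 2); lra.
Qed.

Lemma cubF_norm_eq1_traceN1 p : 1 <= 4 * p -> cubF_norm (-1) p = 1 -> p != 7 ->
  `|p - 7| < 1.
Proof.
move=> p_ge /eqP; rewrite -subr_eq0.
have -> : cubF_norm (-1) p - 1 = (p - 7) * (p ^+ 2 - 7 * p - 1) by rewrite /cubF_norm; ring.
rewrite mulf_eq0 subr_eq0 => /orP[-> // | /eqP h _].
by rewrite ltr_norml; apply/andP; split; nra.
Qed.

End RealCurve.

(** * Transfer to algebraic numbers *)

Lemma rmorph_cubF (R S : pzRingType) (f : {rmorphism R -> S}) (v : R) :
  f (cubF v) = cubF (f v).
Proof. by rewrite /cubF !(rmorphB, rmorphD, rmorphM, rmorphXn, rmorph_nat, rmorph1). Qed.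

Lemma rmorph_cubF_norm (R S : pzRingType) (f : {rmorphism R -> S}) (s p : R) :
  f (cubF_norm s p) = cubF_norm (f s) (f p).
Proof.
by rewrite /cubF_norm !(rmorphB, rmorphD, rmorphM, rmorphXn, rmorph_nat, rmorph1).
Qed.

Lemma algR_leE (x y : algR) : (x <= y) = (algRval x <= algRval y). Proof. by []. Qed.
Lemma algR_ltE (x y : algR) : (x < y) = (algRval x < algRval y). Proof. by []. Qed.
Lemma algR_normE (x : algR) : algRval `|x| = `|algRval x|. Proof. by []. Qed.

Lemma cubF_norm1_algR (v : algC) : `|cubF v| = 1 -> exists s p : algR,
  [/\ algRval s = v + v^*, algRval p = v * v^*, s ^+ 2 <= 4 * p & cubF_norm s p = 1].
Proof.
move=> Fv.
have sR : v + v^* \is Creal by rewrite CrealE rmorphD /= conjCK addrC.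
have pR : v * v^* \is Creal by rewrite CrealE rmorphM /= conjCK mulrC.
exists (in_algR sR), (in_algR pR); split => //.
  rewrite algR_leE rmorphXn rmorphM rmorph_nat /= -subr_ge0.
  have -> : 4 * (v * v^*) - (v + v^*) ^+ 2 = (v - v^*) * (v - v^*)^*.
    by rewrite rmorphB /= conjCK; ring.
  exact: mul_conjC_ge0.
apply: (fmorph_inj algRval); rewrite rmorph1 rmorph_cubF_norm /=.
by rewrite cubF_normE -rmorph_cubF -normCK Fv expr1n.
Qed.

Lemma cubF_norm1_trace (v : algC) : `|cubF v| = 1 ->
  `|(v + v^*) ^+ 2 + (v + v^*)| < 1.
Proof.
move=> /cubF_norm1_algR[s [p [<- _ sp G1]]].
have := cubF_norm_eq1_trace sp G1.
by rewrite algR_ltE algR_normE rmorph1 rmorphD rmorphXn.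
Qed.

Lemma cubF_norm1_trace0 (v : algC) : `|cubF v| = 1 -> v + v^* = 0 -> v = 0.
Proof.
move=> /cubF_norm1_algR[s [p [<- pE sp G1]]] s0.
have {}s0 : s = 0 by apply: (fmorph_inj algRval); rewrite rmorph0.
move: sp G1; rewrite s0 => sp /cubF_norm_eq1_trace0 p0.
have p_ge0 : 0 <= p by lra.
have /eqP : v * v^* = 0 by rewrite -pE p0 // rmorph0.
by rewrite mul_conjC_eq0 => /eqP.
Qed.

Lemma cubF_norm1_traceN1 (v : algC) : `|cubF v| = 1 -> v + v^* = -1 -> v * v^* != 7 ->
  `|v * v^* - 7| < 1.
Proof.
move=> /cubF_norm1_algR[s [p [<- <- sp G1]]] s1 p7.
have {}s1 : s = -1 by apply: (fmorph_inj algRval); rewrite rmorphN1.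
have {}p7 : p != 7 by apply: contra p7 => /eqP ->; rewrite rmorph_nat.
move: sp G1; rewrite s1 => sp G1.
have p_ge : 1 <= 4 * p by lra.
have := cubF_norm_eq1_traceN1 p_ge G1 p7.
by rewrite algR_ltE algR_normE rmorph1 rmorphB rmorph_nat.
Qed.

(** * Conjugates of algebraic integers *)

Lemma normal_num_field_aut (Qs : fieldExtType rat) (P : {poly Qs}) (a b : Qs) :
    P \is a polyOver 1%VS -> splittingFieldFor 1 P fullv -> root (minPoly 1 a) b ->
  exists g : {rmorphism Qs -> Qs}, g a = b.
Proof.
move=> P1 splitP rb; pose f := kHomExtend 1 \1%VF a b.
have homf : kHom 1 <<1; a>> f by apply: kHomExtendP; rewrite ?kHom1 ?lfun1_poly.
have splitPa : splittingFieldFor <<1; a>> P fullv.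
  by apply: splittingFieldForS splitP; rewrite ?sub1v ?subvf.
have [g homg Dg] := kHom_extends (sub1v _) homf P1 splitPa.
pose gM := GRing.isMonoidMorphism.Build _ _ (fun_of_lfun g) (kHom_monoid_morphism homg).
exists (HB.pack (fun_of_lfun g) gM : {rmorphism Qs -> Qs}) => /=.
by rewrite -Dg ?memv_adjoin // (kHomExtend_val (kHom1 1 1)) ?lfun1_poly.
Qed.

Lemma minCpoly_root_aut (x r : algC) : root (minCpoly x) r ->
  exists nu : {rmorphism algC -> algC}, nu x = r.
Proof.
move=> rr; have [p0 [Dp0 _] dv_p0] := minCpolyP x.
have [rs Drs] := closed_field_poly_normal (minCpoly x).
rewrite (monicP (minCpoly_monic x)) scale1r in Drs.
have [Qs [QsC [s1 Ds1 gen]]] := num_field_exists rs.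
have mapQ q : map_poly QsC (map_poly (in_alg Qs) q) = map_poly (@ratr algC) q.
  by rewrite -map_poly_comp; apply: eq_map_poly => c /=; rewrite rmorphZ_num rmorph1 mulr1.
have [a _ Da] : exists2 a, a \in s1 & x = QsC a.
  by apply/mapP; rewrite Ds1 -root_prod_XsubC -Drs root_minCpoly.
have [b _ Db] : exists2 b, b \in s1 & r = QsC b.
  by apply/mapP; rewrite Ds1 -root_prod_XsubC -Drs.
have DP : \prod_(y <- s1) ('X - y%:P) = map_poly (in_alg Qs) p0.
  apply: (@map_poly_inj _ _ QsC); rewrite mapQ -Dp0 Drs -Ds1 rmorph_prod big_map.
  by apply: eq_bigr => y _; rewrite rmorphB /= map_polyX map_polyC.
have splitP : splittingFieldFor 1 (map_poly (in_alg Qs) p0) fullv.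
  by exists s1; rewrite ?DP ?eqpxx.
have [m Dm] : exists m, minPoly 1 a = map_poly (in_alg Qs) m.
  by apply/polyOver1P; apply: minPolyOver.
have rb : root (minPoly 1 a) b.
  have p0_dvd_m : p0 %| m by rewrite -dv_p0 -mapQ -Dm Da fmorph_root root_minPoly.
  by rewrite Dm -(fmorph_root QsC) mapQ -Db (root_dvdp _ rr) // Dp0 dvdp_map.
have [g Dg] := normal_num_field_aut (alg_polyOver _ p0) splitP rb.
have [nu Dnu] := extend_algC_subfield_aut QsC g.
by exists nu; rewrite Da -Dnu Dg Db.
Qed.

Lemma Aint_aut_norm_lt1 (x : algC) : x \in Aint ->
  (forall nu : {rmorphism algC -> algC}, `|nu x| < 1) -> x = 0.
Proof.
move=> Ax lt1; apply/eqP; apply: contraT => nz_x.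
have [rs Drs] := closed_field_poly_normal (minCpoly x).
rewrite (monicP (minCpoly_monic x)) scale1r in Drs.
have rs_lt1 r : r \in rs -> `|r| < 1 /\ r != 0.
  by rewrite -root_prod_XsubC -Drs => /minCpoly_root_aut[nu <-]; rewrite lt1 fmorph_eq0.
pose c0 := (minCpoly x)`_0.
have c0Z : c0 \is a Num.int by move: Ax; rewrite unfold_in => /polyOverP/(_ 0%N).
have c0E : `|c0| = \prod_(r <- rs) `|r|.
  rewrite /c0 -horner_coef0 Drs horner_prod normr_prod; apply: eq_bigr => r _.
  by rewrite hornerXsubC sub0r normrN.
have c0_nz : c0 != 0.
  by rewrite -normr_eq0 c0E prodf_seq_eq0; apply/hasPn => r /rs_lt1[_]; rewrite normr_eq0.
have x_rs : x \in rs by rewrite -root_prod_XsubC -Drs root_minCpoly.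
have := norm_intr_ge1 c0Z c0_nz; rewrite c0E (perm_big _ (perm_to_rem x_rs)) big_cons.
have rest_le1 : \prod_(r <- rem x rs) `|r| <= 1.
  rewrite big_seq_cond prodr_ile1 // => r /andP[/mem_rem/rs_lt1[r_lt1 _] _].
  by rewrite normr_ge0 ltW.
have := ler_wpM2l (normr_ge0 x) rest_le1; rewrite mulr1 => le_x.
have [x_lt1 _] := rs_lt1 x x_rs.
by move=> /le_trans/(_ le_x)/(lt_le_trans x_lt1); rewrite ltxx.
Qed.

Lemma monic_subC (R : nzRingType) (p : {poly R}) c :
  p \is monic -> (1 < size p)%N -> p - c%:P \is monic.
Proof.
move=> monp szp; rewrite monicE lead_coefDl ?(monicP monp) // size_polyN size_polyC.
by case: (c != 0) => //; apply: ltnW.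
Qed.

Lemma Aint_poly_unity_root (P : {poly algC}) (u z : algC) n :
    P \is monic -> P \is a polyOver Num.int -> (1 < size P)%N ->
  (0 < n)%N -> z ^+ n = 1 -> P.[u] = z -> u \in Aint.
Proof.
move=> monP intP szP n_gt0 zn Pu; apply: (@root_monic_Aint (P ^+ n - 1)).
- by rewrite /root hornerD hornerN horner_exp Pu zn hornerC subrr.
- apply: monic_subC; first exact: monic_exp.
  have : (0 < (size P).-1 * n)%N by rewrite muln_gt0 n_gt0 -subn1 subn_gt0 szP.
  by rewrite -size_exp; case: (size _) => [|[]].
- (* The rpred lemmas only see the subring structure of the unfolded predicate. *)
  suff : P ^+ n - 1 \is a polyOver Num.int_num_subdef by [].
  by rewrite rpredB ?rpredX ?rpred1.
Qed.

Lemma Aint_cubF_unity (u z : algC) n : (0 < n)%N -> z ^+ n = 1 -> cubF u = z ->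
  u \in Aint.
Proof.
move=> n_gt0 zn Fu.
pose Q : {poly algC} := ('X + 1%:P) * ('X^2 + 7%:P).
have monQ : Q \is monic by rewrite /Q monicMl ?monicXaddC ?monicXnaddC.
have szQ : size Q = 4.
  rewrite /Q size_monicM ?monicXaddC ?monic_neq0 ?monicXnaddC //.
  by rewrite (@size_XaddC algC 1) (@size_XnaddC algC 2 7).
apply: (@Aint_poly_unity_root (Q - 8%:P) u z n) => //.
- by rewrite monic_subC ?szQ.
- suff : Q - 8%:P \is a polyOver Num.int_num_subdef by [].
  apply: rpredB; last by rewrite polyOverC rpred_nat.
  by apply: rpredM; apply: rpredD; rewrite ?rpredX ?polyOverX ?polyOverC ?rpred1 ?rpred_nat.
- by rewrite size_addl ?szQ // size_polyN size_polyC; case: (_ != 0).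
- by rewrite hornerD hornerN hornerC hornerM !hornerD hornerX hornerXn !hornerC -Fu /cubF; ring.
Qed.

(** * Complex conjugation on abelian number fields *)

Lemma num_field_embedding (L : fieldExtType rat) : inhabited {rmorphism L -> algC}.
Proof.
have sep : separable 1 {:L}.
  apply/separableP => y _; apply: pcharf0_separable.
  exact: ftrans (pchar_lalg L) (pchar_num _).
pose g := separable_generator 1 {:L}.
have genL : <<1; g>>%VS = fullv by rewrite -eq_adjoin_separable_generator ?sub1v.
have [m Dm] : exists m, minPoly 1 g = map_poly (in_alg L) m.
  by apply/polyOver1P; apply: minPolyOver.
have [c mc] : exists c, root (map_poly (@ratr algC) m) c.
  apply/closed_rootP; rewrite size_map_poly.
  by have := size_minPoly 1 g; rewrite Dm size_map_poly => ->.
have hornerP v : exists p : {poly rat}, v == (map_poly (in_alg L) p).[g].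
  have /Fadjoin1_polyP[p ->] : v \in <<1; g>>%VS by rewrite genL memvf.
  by exists p.
pose pv v := xchoose (hornerP v).
have Dpv v : v = (map_poly (in_alg L) (pv v)).[g] by apply/eqP/(xchooseP (hornerP v)).
pose eps v := (map_poly (@ratr algC) (pv v)).[c].
have epsE v p : v = (map_poly (in_alg L) p).[g] -> eps v = (map_poly ratr p).[c].
  move=> Dv; apply/eqP; rewrite -subr_eq0 -hornerN -hornerD -rmorphB.
  apply/eqP/rootP; apply: root_dvdp mc; rewrite dvdp_map -(dvdp_map (in_alg L)) -Dm.
  apply: minPoly_dvdp; first exact: alg_polyOver.
  by rewrite /root rmorphB hornerD hornerN -Dpv -Dv subrr.
have epsB : zmod_morphism eps.
  move=> v w; rewrite (epsE _ (pv v - pv w)) ?rmorphB ?hornerD ?hornerN //.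
  by rewrite -!Dpv.
have epsM : monoid_morphism eps.
  split=> [|v w]; first by rewrite (epsE 1 1) ?rmorph1 ?hornerC.
  by rewrite (epsE _ (pv v * pv w)) ?rmorphM ?hornerM // -!Dpv.
pose epsA := GRing.isZmodMorphism.Build _ _ eps epsB.
pose epsM' := GRing.isMonoidMorphism.Build _ _ eps epsM.
by constructor; exact: (HB.pack eps epsA epsM').
Qed.

Lemma lrmorphism_gal (L : splittingFieldType rat) (f : {lrmorphism L -> L}) :
  exists2 x : gal_of {:L}, x \in ('Gal({:L} / 1%AS))%g & forall y, f y = x y.
Proof.
have homf : kHom 1 {:L} (linfun f).
  apply/kHomP_tmp; split=> [_ /vlineP[c ->] | a b _ _]; rewrite !lfunE /=.
    by rewrite linearZ /= rmorph1.
  by rewrite rmorphM.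
have autf : kAut 1 {:L} (linfun f) by rewrite kAutfE.
have [x Gx Dx] := kAut_to_gal autf.
by exists x => // y; rewrite -Dx ?memvf // lfunE.
Qed.

Definition conjC_central (x : algC) :=
  forall nu : {rmorphism algC -> algC}, nu x^* = (nu x)^*.

Lemma abelian_conjC_central (L : splittingFieldType rat)
    (habel : abelian 'Gal({:L} / 1%AS)) (e : {rmorphism L -> algC}) (a : L) :
  conjC_central (e a).
Proof.
move=> nu; have [iota Diota] := restrict_aut_to_normal_num_field e (@Num.conj algC).
have [mu Dmu] := restrict_aut_to_normal_num_field e nu.
have [gi Ggi Dgi] := lrmorphism_gal iota; have [gm Ggm Dgm] := lrmorphism_gal mu.
have gim : commute gi gm by apply: (centP (subsetP habel gi Ggi)).
by rewrite -Diota -Dmu -Dmu -Diota Dgi Dgm Dgm Dgi -!galM ?memvf // gim.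
Qed.

Lemma conjC_centralB x y : conjC_central x -> conjC_central y -> conjC_central (x - y).
Proof. by move=> cx cy nu; rewrite !rmorphB /= cx cy. Qed.

Lemma conjC_centralM x y : conjC_central x -> conjC_central y -> conjC_central (x * y).
Proof. by move=> cx cy nu; rewrite !rmorphM /= cx cy. Qed.

Lemma conjC_centralV x : conjC_central x -> conjC_central x^-1.
Proof. by move=> cx nu; rewrite !fmorphV /= cx. Qed.

Lemma conjC_central_nat n : conjC_central n%:R.
Proof. by move=> nu; rewrite !rmorph_nat. Qed.

Lemma conjC_unity_root (z : algC) n : (0 < n)%N -> z ^+ n = 1 -> z^* = z^-1.
Proof.
move=> n_gt0 zn; rewrite invC_norm.
have /eqP-> : `|z| == 1 by rewrite -(pexpr_eq1 n_gt0) ?normr_ge0 // -normrX zn normr1.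
by rewrite expr1n invr1 mul1r.
Qed.

Lemma conjC_central_unity_root (z : algC) n : (0 < n)%N -> z ^+ n = 1 -> conjC_central z.
Proof.
move=> n_gt0 zn nu; have nu_zn : nu z ^+ n = 1 by rewrite -rmorphXn zn rmorph1.
by rewrite (conjC_unity_root n_gt0 zn) (conjC_unity_root n_gt0 nu_zn) fmorphV.
Qed.

Lemma conjC_central_cubF_unity (u z : algC) n : (0 < n)%N -> z ^+ n = 1 ->
  cubF u = - z -> conjC_central u -> z = 1.
Proof.
move=> n_gt0 zn Fu cu.
have Fnu (nu : {rmorphism algC -> algC}) : `|cubF (nu u)| = 1.
  have nu_zn : nu z ^+ n = 1 by rewrite -rmorphXn zn rmorph1.
  apply/eqP; rewrite -rmorph_cubF Fu rmorphN normrN -(pexpr_eq1 n_gt0) ?normr_ge0 //.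
  by rewrite -normrX nu_zn normr1.
have Au : u \in Aint.
  apply: (Aint_cubF_unity (n := 2 * n)) Fu; first by rewrite muln_gt0 n_gt0.
  by rewrite exprM sqrrN -exprM mulnC exprM zn expr1n.
pose s := u + u^*; pose p := u * u^*.
have As : s \in Aint by rewrite rpredD // (Aint_aut (@Num.conj algC)).
have Ap : p \in Aint by rewrite rpredM // (Aint_aut (@Num.conj algC)).
have nu_s (nu : {rmorphism algC -> algC}) : nu s = nu u + (nu u)^* by rewrite rmorphD cu.
have nu_p (nu : {rmorphism algC -> algC}) : nu p = nu u * (nu u)^* by rewrite rmorphM cu.
have /eqP : s * (s + 1) = 0.
  rewrite mulrDr mulr1 -expr2; apply: Aint_aut_norm_lt1; first by rewrite rpredD ?rpredX.
  by move=> nu; rewrite rmorphD rmorphXn nu_s cubF_norm1_trace.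
rewrite mulf_eq0 => /orP[/eqP s0 | ].
  have u0 : u = 0 by apply: cubF_norm1_trace0 (Fnu idfun) s0.
  by apply/eqP; rewrite -eqr_opp -Fu u0 /cubF; apply/eqP; ring.
rewrite addr_eq0 => /eqP sN1.
have [p7 | p_neq7] := eqVneq p 7.
  have : cubF u = u * (u * (s + 1) - (p - 7)) - 1 by rewrite /cubF /s /p; ring.
  by rewrite sN1 p7 addNr subrr mulr0 subr0 mulr0 sub0r Fu => /oppr_inj.
have /eqP : p - 7 = 0.
  apply: Aint_aut_norm_lt1; first by rewrite rpredB ?rpred_nat.
  move=> nu; rewrite rmorphB rmorph_nat nu_p cubF_norm1_traceN1 //.
    by rewrite -nu_s sN1 rmorphN1.
  by rewrite -nu_p -(rmorph_nat nu) (inj_eq (fmorph_inj nu)).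
by rewrite subr_eq0 (negPf p_neq7).
Qed.

(** * Roots of Delta~_{3k,3} *)

Lemma delta3C_monic : delta3C \is monic.
Proof.
rewrite /delta3C monicE -addrA lead_coefDl ?lead_coefXn // size_polyXn -mulNr -polyCN.
rewrite (leq_ltn_trans (size_add _ _)) // gtn_max size_polyC.
by rewrite (leq_ltn_trans (size_mul_leq _ _)) ?size_polyX ?size_polyC //;
  case: (_ != 0 :> {poly int}).
Qed.

Lemma Delta3k3_root_unity k (w : algC) : (2 <= k)%N ->
    root (map_poly intr (Delta3k3 k)) w ->
  exists zeta : algC, [/\ zeta ^+ k = 1, zeta != 1
    & zeta ^+ 2 - (2 * w + 16) * zeta + (w ^+ 3 + 8 * w ^+ 2 + 16 * w + 64) = 0].
Proof.
move=> k_ge2 rw.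
have hw : commr_rmorph (intr : int -> algC) w by move=> a; apply: mulrC.
pose h : {rmorphism {poly int} -> algC} := horner_morph hw.
have hPhi : map_poly h (map_poly polyC 'Phi_k) = map_poly intr 'Phi_k.
  by rewrite -map_poly_comp; apply: eq_map_poly => c /=; rewrite horner_morphC.
have hdelta : map_poly h delta3C =
    'X^2 - (2 * w + 16)%:P * 'X + (w ^+ 3 + 8 * w ^+ 2 + 16 * w + 64)%:P.
  have hX : h Cvar = w by apply: horner_morphX.
  rewrite /delta3C rmorphD rmorphB rmorphXn rmorphM /= map_polyX !map_polyC.
  have h1 : h (2 * Cvar + 16) = 2 * w + 16 by rewrite rmorphD rmorphM !rmorph_nat hX.
  have h2 : h (Cvar ^+ 3 + 8 * Cvar ^+ 2 + 16 * Cvar + 64) = w ^+ 3 + 8 * w ^+ 2 + 16 * w + 64.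
    by rewrite 3!rmorphD !rmorphM !rmorph_nat hX; ring.
  by congr (_ - _%:P * _ + _%:P); [exact: h1 | exact: h2].
have lead_Phi : h (lead_coef (map_poly polyC 'Phi_k)) != 0.
  by rewrite lead_coef_map_inj ?(monicP (Cyclotomic_monic k)) ?rmorph1 ?oner_neq0 //;
    apply: polyC_inj.
have lead_delta : h (lead_coef delta3C) != 0 by rewrite (monicP delta3C_monic) rmorph1 oner_neq0.
have := rw; rewrite /root /Delta3k3 -[_.[w]]/(h _) (map_resultant lead_Phi lead_delta).
rewrite hPhi hdelta resultant_eq0 => /gtn_eqF/negbT/closed_rootP[zeta].
rewrite root_gcd => /andP[Phi_zeta delta_zeta].
have [z0 prim_z0] := C_prim_root_exists (ltnW k_ge2).
rewrite (Cintr_Cyclotomic prim_z0) (root_cyclotomic prim_z0) in Phi_zeta.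
exists zeta; split; first exact: prim_expr_order Phi_zeta.
  by rewrite -[zeta]expr1 -(prim_order_dvd Phi_zeta) dvdn1 gtn_eqF.
by move/rootP: delta_zeta; rewrite !hornerE.
Qed.

Lemma delta3_root_cubF (F : fieldType) (w zeta : F) : zeta != 8 ->
    zeta ^+ 2 - (2 * w + 16) * zeta + (w ^+ 3 + 8 * w ^+ 2 + 16 * w + 64) = 0 ->
  cubF ((zeta - w - 8) / w) = - zeta.
Proof.
(* The quadratic reads (zeta - w - 8)^2 = -(w + 7) w^2. *)
move=> zeta_neq8 quad.
have w_neq0 : w != 0.
  apply: contra zeta_neq8 => /eqP w0; move: quad; rewrite w0.
  have -> : zeta ^+ 2 - (2 * 0 + 16) * zeta + (0 ^+ 3 + 8 * 0 ^+ 2 + 16 * 0 + 64)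
    = (zeta - 8) ^+ 2 :> F by ring.
  by move/eqP; rewrite sqrf_eq0 subr_eq0.
set u := _ / _; have uw : u * w = zeta - w - 8 by rewrite divfK.
have u2 : u ^+ 2 = - (w + 7).
  apply: (mulIf (expf_neq0 2 w_neq0)); rewrite -exprMn uw; apply/eqP.
  by rewrite -subr_eq0 -quad; apply/eqP; ring.
apply/eqP; rewrite -subr_eq0 opprK.
have -> : cubF u + zeta = (u + 1) * (u ^+ 2 + (w + 7)) - (u * w - (zeta - w - 8)).
  by rewrite /cubF; ring.
by rewrite u2 uw addNr !subrr mulr0 subrr.
Qed.

Theorem theorem4p3 (k : nat) (hk : (2 <= k)%N)
    (L : splittingFieldType rat)
    (habel : abelian 'Gal({:L} / 1%AS)) (z : L) :
  ~~ root (map_poly (fun c : int => c%:~R : L) (Delta3k3 k)) z.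
Proof.
apply/negP => rz; have [e] := num_field_embedding L.
have rw : root (map_poly intr (Delta3k3 k)) (e z).
  by rewrite -(fmorph_root e) -map_poly_comp (eq_map_poly (rmorph_int e)) in rz.
have [zeta [zk z1 quad]] := Delta3k3_root_unity hk rw.
have k_gt0 : (0 < k)%N by apply: ltnW.
have zeta_neq8 : zeta != 8.
  by apply/eqP => z8; move/eqP: zk; rewrite z8 -natrX pnatr_eq1 -(exp1n k) eqn_exp2r.
have cw := abelian_conjC_central habel e z.
have cu : conjC_central ((zeta - e z - 8) / e z).
  apply: conjC_centralM (conjC_centralV cw).
  exact: conjC_centralB (conjC_centralB (conjC_central_unity_root k_gt0 zk) cw)
    (conjC_central_nat 8).
have := conjC_central_cubF_unity k_gt0 zk (delta3_root_cubF zeta_neq8 quad) cu.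
by move/eqP; rewrite (negPf z1).
Qed.
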